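(* Let $\Omega$ be a norm on $\mathbb{R}^p$, fix $J\subset\{1,\dots,p\}$, and let $g$ be the gauge function described in the context. Then: (1) $g$ is a norm on $\mathbb{R}^p$. (2) For every allowed set $S$ and every $\beta\in\mathbb{R}^p$: $g(\beta)\le\Upsilon_S(\beta)\le\Omega(\beta)$ and $g(\beta)\le\Upsilon_S(\beta_{f(J)})$. (3) $g$ is the dual norm of the norm $\beta\mapsto\max_{S\text{ allowed}}\max\big(\Upsilon_S^{*}(\beta),\Upsilon_S^{*}(\beta_{f(J)})\big)$; moreover, for every allowed $S$ and every $z\in\mathbb{R}^p$, $\Upsilon_S^{*}(z)=\max\big(\Omega^{*}(z_S),(\Omega^{S^{c}})^{*}(z_{S^{c}})\big)$. (4) $g(\beta_{J^{c}})\le g(\beta)$ for all $\beta\in\mathbb{R}^p$.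
   Context: For $\beta\in\mathbb{R}^p$ and $J\subset\{1,\dots,p\}$, $\beta_J$ is the vector with entries $\beta_j1\{j\in J\}$ (or its restriction to $J$, depending on context). A set $S\subset\{1,\dots,p\}$ is allowed (for $\Omega$) if there is a norm $\Omega^{S^{c}}$ on $\mathbb{R}^{|S^{c}|}$ with $\Omega(\beta_S)+\Omega^{S^{c}}(\beta_{S^{c}})\le\Omega(\beta)$ for all $\beta$; for each allowed $S$ such a norm is fixed and $\Upsilon_S(\beta):=\Omega(\beta_S)+\Omega^{S^{c}}(\beta_{S^{c}})$. For a norm $N$, $N^{*}(z):=\sup_{N(\beta)\le1}\beta^{T}z$ is its dual norm. Let $\beta_{f(J)}:=\beta_J-\beta_{J^{c}}$ and $\mathrm{flip}_J(B):=\{\beta_{f(J)}:\beta\in B\}$ for $B\subset\mathbb{R}^p$. Let $\overline{B}:=\bigcup_{S\text{ allowed}}\{\beta:\Upsilon_S(\beta)\le1\}$, $B_g:=\mathrm{Conv}(\overline{B}\cup\mathrm{flip}_J(\overline{B}))$, and $g(x):=\inf\{t>0:x\in tB_g\}$. *)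

From HB Require Import structures.
From mathcomp Require Import all_boot all_order all_algebra.
From mathcomp Require Import boolp classical_sets reals.
Set Implicit Arguments. Unset Strict Implicit. Unset Printing Implicit Defensive.
Import Order.TTheory GRing.Theory Num.Theory.
Local Open Scope ring_scope.
Local Open Scope classical_set_scope.

Section Defs.
Variables (R : realType) (p : nat).
Notation vec := 'rV[R]_p.

Definition restr (J : {set 'I_p}) (b : vec) : vec :=
  \row_j (if j \in J then b ord0 j else 0).

(* beta_{f(J)} := beta_J - beta_{J^c} *)
Definition flipv (J : {set 'I_p}) (b : vec) : vec := restr J b - restr (~: J) b.

Definition flipset (J : {set 'I_p}) (B : set vec) : set vec := flipv J @` B.

Definition supported (A : {set 'I_p}) (b : vec) : Prop := forall j, j \notin A -> b ord0 j = 0.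

(* N is a norm on the coordinate subspace R^A (identified with R^{|A|}) *)
Definition is_norm_on (A : {set 'I_p}) (N : vec -> R) : Prop :=
  [/\ forall b, supported A b -> 0 <= N b,
      forall b, supported A b -> N b = 0 -> b = 0,
      forall (t : R) b, supported A b -> N (t *: b) = `|t| * N b &
      forall b c, supported A b -> supported A c -> N (b + c) <= N b + N c].

Definition is_norm (N : vec -> R) : Prop := is_norm_on [set: 'I_p]%SET N.

Definition dotv (b z : vec) : R := \sum_j b ord0 j * z ord0 j.

Definition dual_on (A : {set 'I_p}) (N : vec -> R) (z : vec) : R :=
  sup [set dotv b z | b in [set b | supported A b /\ N b <= 1]].

Definition dual (N : vec -> R) (z : vec) : R := dual_on [set: 'I_p]%SET N z.

Definition allowed (Om : vec -> R) (S : {set 'I_p}) : Prop :=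
  exists N : vec -> R, is_norm_on (~: S) N /\
    forall b, Om (restr S b) + N (restr (~: S) b) <= Om b.

Definition Upsilon (Om : vec -> R) (OmS : {set 'I_p} -> vec -> R) (S : {set 'I_p}) (b : vec) : R :=
  Om (restr S b) + OmS S (restr (~: S) b).

Definition conv_hull (A : set vec) : set vec :=
  [set x | exists n (w : 'I_n -> R) (a : 'I_n -> vec),
     [/\ forall i, 0 <= w i, \sum_i w i = 1, forall i, A (a i) & x = \sum_i w i *: a i]].

Definition Bbar (Om : vec -> R) (OmS : {set 'I_p} -> vec -> R) : set vec :=
  \bigcup_(S in [set S | allowed Om S]) [set b | Upsilon Om OmS S b <= 1].

Definition Bg Om OmS (J : {set 'I_p}) : set vec :=
  conv_hull (Bbar Om OmS `|` flipset J (Bbar Om OmS)).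

Definition gauge (B : set vec) (x : vec) : R :=
  inf [set t | 0 < t /\ exists2 b, B b & x = t *: b].

Definition g Om OmS J : vec -> R := gauge (Bg Om OmS J).

Definition gdual Om OmS (J : {set 'I_p}) (b : vec) : R :=
  \big[Num.max/0]_(S : {set 'I_p} | `[< allowed Om S >])
     Num.max (dual (Upsilon Om OmS S) b) (dual (Upsilon Om OmS S) (flipv J b)).

End Defs.

(* B_g is convex, symmetric, absorbing and stable under the flip,
   so its gauge g is a flip-invariant sublinear functional; it is bounded by
   every Upsilon_S because the unit ball of Upsilon_S lies in B_g, and
   averaging b with its flip bounds g(b_{J^c}) by g(b).  Every point of B_g
   pairs with z to at most h(z), the max over allowed S of Upsilon_S^*(z) and
   Upsilon_S^*(z_{f(J)}); hence h^* <= g, which also makes g definite.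
   Conversely, a Hahn-Banach functional z supporting g at b has h(z) <= 1, so
   g(b) <= h^*(b).  All these suprema are finite because a norm on a
   coordinate subspace dominates a multiple of the sup norm (compactness of
   the cube).  Finally Upsilon_S is the l1-sum of Omega on R^S and
   Omega^{S^c} on R^{S^c}, so its dual norm is the max of the two duals. *)

From HB Require Import structures.
From mathcomp Require Import all_boot all_order all_algebra.
From mathcomp Require Import boolp classical_sets reals topology normedtype derive.
From mathcomp Require Import lra.

Set Implicit Arguments. Unset Strict Implicit. Unset Printing Implicit Defensive.
Import Order.TTheory GRing.Theory Num.Theory.
Import numFieldTopology.Exports numFieldNormedType.Exports.
Local Open Scope ring_scope.
Local Open Scope classical_set_scope.

Section Coordinates.
Variables (R : realType) (p : nat).
Local Notation vec := 'rV[R]_p.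
Implicit Types (A J : {set 'I_p}) (b c z : vec).

Lemma restrE A b j : restr A b ord0 j = if j \in A then b ord0 j else 0.
Proof. by rewrite mxE. Qed.

Lemma restrD A b c : restr A (b + c) = restr A b + restr A c.
Proof. by apply/rowP => j; rewrite !mxE; case: ifP; rewrite ?addr0. Qed.

Lemma restrZ A (t : R) b : restr A (t *: b) = t *: restr A b.
Proof. by apply/rowP => j; rewrite !mxE; case: ifP; rewrite ?mulr0. Qed.

Lemma restr0 A : restr A (0 : vec) = 0.
Proof. by apply/rowP => j; rewrite !mxE if_same. Qed.

Lemma restrB A b c : restr A (b - c) = restr A b - restr A c.
Proof. by apply/rowP => j; rewrite !mxE; case: ifP; rewrite ?subr0. Qed.

Lemma restrT b : restr [set: 'I_p] b = b.
Proof. by apply/rowP => j; rewrite !mxE inE. Qed.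

Lemma restr_sum A (I : finType) (F : I -> vec) :
  restr A (\sum_i F i) = \sum_i restr A (F i).
Proof. exact: (big_morph _ (restrD A) (restr0 A)). Qed.

Lemma restrC A b : restr A b + restr (~: A) b = b.
Proof. by apply/rowP => j; rewrite !mxE inE; case: ifP; rewrite ?addr0 ?add0r. Qed.

Lemma supp0 A : supported A (0 : vec).
Proof. by move=> j _; rewrite mxE. Qed.

Lemma suppD A b c : supported A b -> supported A c -> supported A (b + c).
Proof. by move=> sb sc j jA; rewrite mxE sb ?sc ?addr0. Qed.

Lemma suppZ A (t : R) b : supported A b -> supported A (t *: b).
Proof. by move=> sb j jA; rewrite mxE sb ?mulr0. Qed.

Lemma suppN A b : supported A b -> supported A (- b).
Proof. by move=> sb j jA; rewrite mxE sb ?oppr0. Qed.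

Lemma suppB A b c : supported A b -> supported A c -> supported A (b - c).
Proof. by move=> sb sc; exact/suppD/suppN. Qed.

Lemma suppT b : supported [set: 'I_p] b.
Proof. by move=> j; rewrite inE. Qed.

Lemma restr_supp A b : supported A (restr A b).
Proof. by move=> j /negbTE jA; rewrite mxE jA. Qed.

Lemma restr_id A b : supported A b -> restr A b = b.
Proof. by move=> sb; apply/rowP => j; rewrite mxE; case: ifPn => // /sb ->. Qed.

Lemma restr_suppC A b : supported (~: A) b -> restr A b = 0.
Proof.
by move=> sb; apply/rowP => j; rewrite !mxE; case: ifPn => // jA; rewrite sb ?inE ?jA.
Qed.

Lemma restrC_restr A b : restr (~: A) (restr A b) = 0.
Proof. by apply/rowP => j; rewrite !mxE inE; case: (j \in A). Qed.

Lemma dotvC b z : dotv b z = dotv z b.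
Proof. by apply: eq_bigr => j _; rewrite mulrC. Qed.

Lemma dotvDl b c z : dotv (b + c) z = dotv b z + dotv c z.
Proof. by rewrite /dotv -big_split; apply: eq_bigr => j _; rewrite mxE mulrDl. Qed.

Lemma dotvZl (t : R) b z : dotv (t *: b) z = t * dotv b z.
Proof. by rewrite /dotv mulr_sumr; apply: eq_bigr => j _; rewrite mxE mulrA. Qed.

Lemma dotvDr b z c : dotv b (z + c) = dotv b z + dotv b c.
Proof. by rewrite dotvC dotvDl !(dotvC b). Qed.

Lemma dotvZr (t : R) b z : dotv b (t *: z) = t * dotv b z.
Proof. by rewrite dotvC dotvZl dotvC. Qed.

Lemma dotv0l z : dotv 0 z = 0.
Proof. by rewrite -(scale0r 0) dotvZl mul0r. Qed.

Lemma dotvNl b z : dotv (- b) z = - dotv b z.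
Proof. by rewrite -scaleN1r dotvZl mulN1r. Qed.

Lemma dotv_suml (I : finType) (F : I -> vec) z :
  dotv (\sum_i F i) z = \sum_i dotv (F i) z.
Proof.
exact: (big_morph (fun b => dotv b z) (fun b c => dotvDl b c z) (dotv0l z)).
Qed.

Lemma dotv_deltal j z : dotv (delta_mx 0 j) z = z ord0 j.
Proof.
rewrite /dotv (bigD1 j) //= big1 => [|k kj]; first by rewrite mxE !eqxx mul1r addr0.
by rewrite mxE (negbTE kj) andbF mul0r.
Qed.

Lemma dotv_restr A b z : dotv (restr A b) z = dotv b (restr A z).
Proof. by apply: eq_bigr => j _; rewrite !mxE; case: ifP; rewrite ?mul0r ?mulr0. Qed.

Lemma dotv_restr_supp A b z : supported A b -> dotv b z = dotv b (restr A z).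
Proof. by move=> sb; rewrite -dotv_restr restr_id. Qed.

Lemma flipvE J b j : flipv J b ord0 j = if j \in J then b ord0 j else - b ord0 j.
Proof. by rewrite !mxE inE; case: (j \in J); rewrite ?subr0 ?sub0r. Qed.

Lemma flipvK J : involutive (@flipv R p J).
Proof.
by move=> b; apply/rowP => j; rewrite !flipvE; case: (j \in J); rewrite ?opprK.
Qed.

Lemma flipvD J b c : flipv J (b + c) = flipv J b + flipv J c.
Proof. by apply/rowP => j; rewrite !(flipvE, mxE); case: (j \in J); rewrite ?opprD. Qed.

Lemma flipvZ J (t : R) b : flipv J (t *: b) = t *: flipv J b.
Proof. by apply/rowP => j; rewrite !(flipvE, mxE); case: (j \in J); rewrite ?mulrN. Qed.

Lemma flipvN J b : flipv J (- b) = - flipv J b.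
Proof. by rewrite -scaleN1r flipvZ scaleN1r. Qed.

Lemma dotv_flipv J b z : dotv (flipv J b) z = dotv b (flipv J z).
Proof.
by apply: eq_bigr => j _; rewrite !flipvE; case: (j \in J); rewrite ?mulNr ?mulrN.
Qed.

Lemma restrC_flipv J b : restr (~: J) b = 2^-1 *: (b - flipv J b).
Proof.
apply/rowP => j; rewrite !mxE !inE.
case: (j \in J) => /=; lra.
Qed.

End Coordinates.

Section SupNorm.
Variables (R : realType) (p : nat).
Local Notation vec := 'rV[R]_p.

Lemma normr_entry_le (b : vec) j : `|b ord0 j| <= `|b|.
Proof.
rewrite -[`|b|]/(mx_norm b) mx_normrE; apply/bigmax_geP; right.
by exists (ord0, j).
Qed.

Lemma normr_le_entries (b : vec) (M : R) :
  0 <= M -> (forall j, `|b ord0 j| <= M) -> `|b| <= M.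
Proof.
move=> M0 bM; rewrite -[`|b|]/(mx_norm b) mx_normrE; apply/bigmax_leP.
by split=> // -[i j] _ /=; rewrite (ord1 i).
Qed.

Lemma normr_restr_le A (b : vec) : `|restr A b| <= `|b|.
Proof.
apply: normr_le_entries => // j; rewrite restrE.
by case: ifP => _; rewrite ?normr_entry_le ?normr0.
Qed.

Lemma lipschitz_continuous (f : vec -> R) (k : R) :
  (forall b c, `|f b - f c| <= k * `|b - c|) -> continuous f.
Proof.
move=> fk b; have k1 : 0 < `|k| + 1 by rewrite ltr_wpDl.
apply/(@cvgrPdist_lt _ _ _ (nbhs b) (nbhs_filter b)) => e e0; near=> c.
apply: le_lt_trans (fk b c) _; apply: le_lt_trans (_ : _ <= (`|k| + 1) * `|b - c|) _.
  by rewrite ler_wpM2r // (le_trans (ler_norm k)) // lerDl.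
rewrite -ltr_pdivlMl //; near: c; apply: cvgr_dist_lt => //.
by rewrite mulrC divr_gt0.
Unshelve. all: by end_near. Qed.

Lemma dotv_le_mx_norm (b z : vec) : dotv b z <= `|b| * \sum_j `|z ord0 j|.
Proof.
rewrite /dotv mulr_sumr ler_sum // => j _; rewrite (le_trans (ler_norm _)) //.
by rewrite normrM ler_wpM2r ?normr_entry_le.
Qed.

End SupNorm.

Section NormOn.
Variables (R : realType) (p : nat) (A : {set 'I_p}) (N : 'rV[R]_p -> R).
Local Notation vec := 'rV[R]_p.
Hypothesis hN : is_norm_on A N.
Implicit Types (b c : vec).

Lemma norm_on_ge0 b : supported A b -> 0 <= N b.
Proof. by case: hN => + _ _ _; apply. Qed.

Lemma norm_on_eq0 b : supported A b -> N b = 0 -> b = 0.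
Proof. by case: hN => _ + _ _; apply. Qed.

Lemma norm_onZ (t : R) b : supported A b -> N (t *: b) = `|t| * N b.
Proof. by case: hN => _ _ + _; apply. Qed.

Lemma norm_onD b c : supported A b -> supported A c -> N (b + c) <= N b + N c.
Proof. by case: hN => _ _ _; apply. Qed.

Lemma norm_on0 : N 0 = 0.
Proof. by have := norm_onZ 0 (@supp0 R p A); rewrite scale0r normr0 mul0r. Qed.

Lemma norm_onN b : supported A b -> N (- b) = N b.
Proof. by move=> sb; rewrite -scaleN1r norm_onZ // normrN1 mul1r. Qed.

Lemma norm_on_gt0 b : supported A b -> b != 0 -> 0 < N b.
Proof.
move=> sb b0; rewrite lt_def norm_on_ge0 // andbT.
by apply: contra_neq b0; exact: norm_on_eq0.
Qed.

Lemma norm_on_dist b c : supported A b -> supported A c -> `|N b - N c| <= N (b - c).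
Proof.
move=> sb sc; have sbc := suppB sb sc.
have := norm_onD sbc sc; rewrite subrK => Nb.
have := norm_onD sb (suppN sbc); rewrite norm_onN // opprB addrC subrK => Nc.
rewrite ler_norml; apply/andP; split; lra.
Qed.

Lemma norm_on_sum (I : finType) (F : I -> vec) :
  (forall i, supported A (F i)) -> N (\sum_i F i) <= \sum_i N (F i).
Proof.
move=> sF; suff [] : supported A (\sum_i F i) /\ N (\sum_i F i) <= \sum_i N (F i) by [].
elim/big_ind2: _ => [|b1 b2 r1 r2 [s1 N1] [s2 N2]|i _]; last by [].
  by rewrite norm_on0; split; [exact: supp0|].
by split; [exact: suppD | rewrite (le_trans (norm_onD s1 s2)) ?lerD].
Qed.

Lemma norm_on_le_mx_norm :
  exists2 k, 0 <= k & forall b, supported A b -> N b <= k * `|b|.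
Proof.
have sd j : supported A (restr A (delta_mx 0 j : vec)) by exact: restr_supp.
exists (\sum_j N (restr A (delta_mx 0 j : vec))) => [|b sb].
  by apply: sumr_ge0 => j _; exact: norm_on_ge0.
rewrite -(restr_id sb) {1}[b]row_sum_delta restr_sum.
under eq_bigr do rewrite restrZ.
apply: le_trans (norm_on_sum (fun j => suppZ _ (sd j))) _.
rewrite mulr_suml ler_sum // => j _; rewrite norm_onZ // mulrC ler_wpM2l ?norm_on_ge0 //.
by rewrite restr_id ?normr_entry_le.
Qed.

Lemma norm_on_restr_continuous : continuous (fun b => N (restr A b)).
Proof.
have [k k0 Nk] := norm_on_le_mx_norm.
apply: (@lipschitz_continuous _ _ _ k) => b c.
rewrite (le_trans (norm_on_dist (restr_supp _) (restr_supp _))) // -restrB.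
by rewrite (le_trans (Nk _ (restr_supp _))) // ler_wpM2l ?normr_restr_le.
Qed.

(* [phi] is positive on the unit cube ([phi v = 1] when [restr A v = 0]) and
   equals [N] on unit vectors supported in [A]; its minimum over the cube is
   the constant of the norm equivalence. *)
Lemma norm_on_ge_mx_norm :
  exists2 m, 0 < m & forall b, supported A b -> m * `|b| <= N b.
Proof.
pose phi b := N (restr A b) + 1 - `|restr A b|.
pose K := [set b : vec | forall j, `[-1, 1]%classic (b ord0 j)].
have [|||c /set_mem Kc phi_min] := @EVT_min_rV R p phi K.
- by exists 0 => j /=; rewrite mxE in_itv /= lerN10 ler01.
- exact: (@rV_compact R p (fun=> `[-1, 1]%classic) (fun=> @segment_compact R (-1) 1)).
- apply: continuous_subspaceT => b.
  apply: (@continuousB _ _ _ (fun b => N (restr A b) + 1) (fun b => `|restr A b|)).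
    by apply: continuousD; [exact: norm_on_restr_continuous | exact: cst_continuous].
  apply: (@lipschitz_continuous _ _ _ 1) => {}b c.
  by rewrite mul1r (le_trans (ler_dist_dist _ _)) // -restrB normr_restr_le.
have phic : 0 < phi c.
  have : `|restr A c| <= 1.
    apply: normr_le_entries => // j; rewrite restrE.
    case: ifP => _; last by rewrite normr0.
    by have := Kc j; rewrite /= in_itv /= ler_norml.
  rewrite /phi; have [->|c0] := eqVneq (restr A c) 0.
    by rewrite norm_on0 normr0; lra.
  by have := norm_on_gt0 (restr_supp c) c0; lra.
exists (phi c) => // b sb; have [->|b0] := eqVneq b 0.
  by rewrite normr0 mulr0 norm_on0.
have nb : 0 < `|b| by rewrite normr_gt0.
pose v := `|b|^-1 *: b.
have nv : `|v| = 1 by rewrite normrZ normfV normr_id mulVf ?gt_eqF.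
have Kv : v \in K.
  apply/mem_set => j /=; rewrite in_itv /= -ler_norml -nv; exact: normr_entry_le.
have sv : supported A v by exact: suppZ.
have := phi_min v Kv; rewrite /phi (restr_id sv) nv norm_onZ // normfV normr_id addrK.
by rewrite mulrC ler_pdivlMr.
Qed.

End NormOn.

Section DualOn.
Variables (R : realType) (p : nat) (A : {set 'I_p}) (N : 'rV[R]_p -> R).
Local Notation vec := 'rV[R]_p.
Hypothesis hN : is_norm_on A N.
Implicit Types (b z w : vec).

Let unit_dots z := [set dotv b z | b in [set b | supported A b /\ N b <= 1]].

Let unit_dots_ubound z : has_ubound (unit_dots z).
Proof.
have [m m0 Nm] := norm_on_ge_mx_norm hN.
exists (m^-1 * \sum_j `|z ord0 j|) => _ [b [sb Nb] <-].
rewrite (le_trans (dotv_le_mx_norm b z)) // ler_wpM2r ?sumr_ge0 //.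
by rewrite -[leRHS]mulr1 ler_pdivlMl // (le_trans (Nm b sb)).
Qed.

Lemma dotv_le_dual_on b z : supported A b -> N b <= 1 -> dotv b z <= dual_on A N z.
Proof.
by move=> sb Nb; apply: ub_le_sup; [exact: unit_dots_ubound | exists b].
Qed.

Lemma dual_on_le z M :
  (forall b, supported A b -> N b <= 1 -> dotv b z <= M) -> dual_on A N z <= M.
Proof.
move=> zM; apply: ge_sup => [|_ [b [sb Nb] <-]]; last exact: zM.
by exists 0, 0; [split; [exact: supp0 | rewrite (norm_on0 hN)] | exact: dotv0l].
Qed.

Lemma dual_on_ge0 z : 0 <= dual_on A N z.
Proof.
by rewrite -(dotv0l z); apply: dotv_le_dual_on; [exact: supp0 | rewrite (norm_on0 hN)].
Qed.

Lemma dotv_le_dual_onM b z : supported A b -> dotv b z <= dual_on A N z * N b.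
Proof.
move=> sb; have [->|b0] := eqVneq b 0; first by rewrite dotv0l (norm_on0 hN) mulr0.
have Nb := norm_on_gt0 hN sb b0.
rewrite -ler_pdivrMr // mulrC -dotvZl; apply: dotv_le_dual_on; first exact: suppZ.
by rewrite (norm_onZ hN) // normfV gtr0_norm // mulVf ?gt_eqF.
Qed.

Lemma normr_dotv_le_dual_onM b z :
  supported A b -> `|dotv b z| <= dual_on A N z * N b.
Proof.
move=> sb; rewrite ler_norml dotv_le_dual_onM // andbT lerNl -dotvNl.
by rewrite -(norm_onN hN sb) (dotv_le_dual_onM _ (suppN sb)).
Qed.

Lemma dual_onZ (t : R) z : dual_on A N (t *: z) = `|t| * dual_on A N z.
Proof.
have le t' z' : dual_on A N (t' *: z') <= `|t'| * dual_on A N z'.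
  apply: dual_on_le => b sb Nb; rewrite dotvZr (le_trans (ler_norm _)) // normrM.
  rewrite ler_wpM2l // (le_trans (normr_dotv_le_dual_onM z' sb)) //.
  by rewrite ler_piMr ?dual_on_ge0.
apply/eqP; rewrite eq_le le /=; have [->|t0] := eqVneq t 0.
  by rewrite normr0 mul0r dual_on_ge0.
rewrite -ler_pdivlMl ?normr_gt0 // -normfV.
by have := le t^-1 (t *: z); rewrite scalerA mulVf // scale1r.
Qed.

Lemma dual_onD z w : dual_on A N (z + w) <= dual_on A N z + dual_on A N w.
Proof. by apply: dual_on_le => b sb Nb; rewrite dotvDr lerD ?dotv_le_dual_on. Qed.

Lemma dual_on_eq0 z : dual_on A N z = 0 -> restr A z = 0.
Proof.
move=> z0; apply/rowP => j; rewrite restrE mxE; case: ifP => // jA.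
have := normr_dotv_le_dual_onM z (restr_supp (delta_mx 0 j : vec)).
by rewrite z0 mul0r normr_le0 dotv_restr dotv_deltal restrE jA => /eqP.
Qed.

End DualOn.

Section HahnBanach.
Variables (R : realType) (p : nat).
Local Notation vec := 'rV[R]_p.
Implicit Types (q : vec -> R) (b e x y : vec).

Definition sublinear q := (forall x y, q (x + y) <= q x + q y) /\
  (forall (t : R) x, 0 <= t -> q (t *: x) = t * q x).

Definition linear_along q e := q e + q (- e) = 0.

Lemma sublinear0 q : sublinear q -> q 0 = 0.
Proof. by case=> _ qZ; have := qZ 0 0 (lexx 0); rewrite scale0r mul0r. Qed.

Lemma sublinear_oppr_le q x : sublinear q -> - q (- x) <= q x.
Proof. by move=> hq; have := hq.1 x (- x); rewrite subrr sublinear0 //; lra. Qed.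

Lemma linear_along_le q q' e : sublinear q' -> (forall x, q' x <= q x) ->
  linear_along q e -> linear_along q' e.
Proof.
move=> hq' q'q qe; apply/eqP; rewrite eq_le -{1}qe lerD //=.
by have := hq'.1 e (- e); rewrite subrr sublinear0.
Qed.

Lemma linear_alongD q e x (s : R) : sublinear q -> linear_along q e ->
  q (x + s *: e) = q x + s * q e.
Proof.
move=> [qD qZ] qe; have qse (s' : R) : q (s' *: e) = s' * q e.
  have [s0|s0] := leP 0 s'; first exact: qZ.
  rewrite -[s' *: e]opprK -scaleNr -scalerN qZ ?oppr_ge0 ?ltW //.
  have -> : q (- e) = - q e by rewrite /linear_along in qe; lra.
  by rewrite mulrNN.
apply/eqP; rewrite eq_le -qse qD /=.
by have := qD (x + s *: e) (- (s *: e)); rewrite addrK -scaleNr !qse; lra.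
Qed.

Section Reduce.
Variables (q : vec -> R) (e : vec).
Hypothesis hq : sublinear q.

(* The one-dimensional Hahn-Banach step. *)
Definition reduce x :=
  inf [set q (x + t *: e) - t * q e | t in [set t : R | 0 <= t]].

Let reduce_lbound x (r : R) :
  [set q (x + t *: e) - t * q e | t in [set t : R | 0 <= t]] r -> - q (- x) <= r.
Proof.
case=> t t0 <-; have := hq.1 (x + t *: e) (- x).
by rewrite addrC addKr hq.2 //; lra.
Qed.

Lemma reduce_le_at x (t : R) : 0 <= t -> reduce x <= q (x + t *: e) - t * q e.
Proof.
by move=> t0; apply: ge_inf; [exists (- q (- x)); exact: reduce_lbound | exists t].
Qed.

Lemma reduce_ge x (M : R) :
  (forall t, 0 <= t -> M <= q (x + t *: e) - t * q e) -> M <= reduce x.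
Proof.
move=> xM; apply: lb_le_inf => [|_ [t t0 <-]]; last exact: xM.
by exists (q (x + 0 *: e) - 0 * q e), 0 => /=.
Qed.

Lemma reduce_le x : reduce x <= q x.
Proof. by have := reduce_le_at x (lexx 0); rewrite scale0r addr0 mul0r subr0. Qed.

Lemma reduce_oppr_ge x : - q (- x) <= reduce x.
Proof. by apply: reduce_ge => t t0; apply: reduce_lbound; exists t. Qed.

Lemma reduce_self : reduce e = q e.
Proof.
apply/eqP; rewrite eq_le reduce_le /=; apply: reduce_ge => t t0.
have -> : e + t *: e = (1 + t) *: e by rewrite scalerDl scale1r.
by rewrite hq.2 ?addr_ge0 // mulrDl mul1r addrK.
Qed.

Lemma reduce_opp : reduce (- e) = - q e.
Proof.
apply/le_anti/andP; split; last by have := reduce_oppr_ge (- e); rewrite opprK.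
by have := reduce_le_at (- e) ler01; rewrite scale1r addNr sublinear0 // mul1r sub0r.
Qed.

Lemma reduce_sublinear : sublinear reduce.
Proof.
split=> [x y|c x c0].
  suff xy t : 0 <= t -> reduce (x + y) - (q (y + t *: e) - t * q e) <= reduce x.
    suff : reduce (x + y) - reduce x <= reduce y by lra.
    by apply: reduce_ge => t t0; have := xy t t0; lra.
  move=> t0; apply: reduce_ge => s s0.
  have := reduce_le_at (x + y) (addr_ge0 s0 t0).
  have := hq.1 (x + s *: e) (y + t *: e); rewrite addrACA -scalerDl mulrDl; lra.
have [->|cn0] := eqVneq c 0.
  rewrite scale0r mul0r; apply/eqP; rewrite eq_le.
  have := reduce_oppr_ge 0; rewrite oppr0 (sublinear0 hq) oppr0 => ->.
  by have := reduce_le 0; rewrite (sublinear0 hq) => ->.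
have cp : 0 < c by rewrite lt_def cn0.
apply/eqP; rewrite eq_le; apply/andP; split.
  rewrite -ler_pdivrMl //; apply: reduce_ge => t t0; rewrite ler_pdivrMl //.
  apply: le_trans (reduce_le_at _ (mulr_ge0 c0 t0)) _.
  by rewrite -scalerA -scalerDr hq.2 // mulrBr mulrA.
apply: reduce_ge => t t0; have := reduce_le_at x (divr_ge0 t0 c0).
rewrite -(ler_pM2l cp) => /le_trans; apply.
have -> : c *: x + t *: e = c *: (x + (t / c) *: e).
  by rewrite scalerDr scalerA mulrCA mulfV ?gt_eqF ?mulr1.
by rewrite hq.2 // mulrBr mulrA mulrCA mulfV ?gt_eqF ?mulr1.
Qed.

End Reduce.

Lemma sublinear_linear_minorant (L : seq vec) q : sublinear q -> exists q',
  [/\ sublinear q', forall x, q' x <= q x & forall e, e \in L -> linear_along q' e].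
Proof.
elim: L q => [|e L IHL] q hq; first by exists q.
have hqe := reduce_sublinear e hq.
have [q' [hq' q'le q'L]] := IHL _ hqe.
exists q'; split=> // [x|e']; first exact: le_trans (q'le x) (reduce_le e hq x).
rewrite in_cons => /predU1P [->|]; last exact: q'L.
apply: linear_along_le hq' q'le _.
by rewrite /linear_along reduce_self ?reduce_opp ?subrr.
Qed.

Lemma sublinear_dotv q : sublinear q -> (forall j, linear_along q (delta_mx 0 j)) ->
  forall x, q x = dotv x (\row_j q (delta_mx 0 j)).
Proof.
move=> hq qlin x; rewrite {1}[x]row_sum_delta /dotv.
elim/big_rec2: _ => [|j r s _ <-]; first exact: sublinear0.
by rewrite addrC linear_alongD // mxE addrC.
Qed.

Lemma hahn_banach_dotv q b : sublinear q ->
  exists z, (forall x, dotv x z <= q x) /\ dotv b z = q b.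
Proof.
move=> hq; have hqb := reduce_sublinear b hq.
have [q' [hq' q'le q'lin]] :=
  sublinear_linear_minorant [seq delta_mx 0 j | j <- enum 'I_p] hqb.
have q'E := sublinear_dotv hq' (fun j => q'lin _ (map_f _ (mem_enum _ j))).
have q'q x : q' x <= q x by exact: le_trans (q'le x) (reduce_le b hq x).
exists (\row_j q' (delta_mx 0 j)); split=> [x|]; first by rewrite -q'E.
apply/eqP; rewrite -q'E eq_le q'q /=.
have := sublinear_oppr_le b hq'; have := q'le (- b); rewrite reduce_opp //; lra.
Qed.

End HahnBanach.

Section ConvexHull.
Variables (R : realType) (p : nat).
Local Notation vec := 'rV[R]_p.
Implicit Types (A : set vec) (x y : vec).

Lemma sub_conv_hull A : A `<=` conv_hull A.
Proof.
move=> x Ax; exists 1%N, (fun=> 1), (fun=> x).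
by split; rewrite ?big_ord1 ?scale1r.
Qed.

Lemma conv_hull_convex A x y (l : R) : 0 <= l <= 1 ->
  conv_hull A x -> conv_hull A y -> conv_hull A (l *: x + (1 - l) *: y).
Proof.
move=> /andP[l0 l1] [n [w [a [w0 w1 aA ->]]]] [m [v [c [v0 v1 cA ->]]]].
pose w' i := match split i with inl i => l * w i | inr j => (1 - l) * v j end.
pose a' i := match split i with inl i => a i | inr j => c j end.
exists (n + m)%N, w', a'; split.
- by move=> i; rewrite /w'; case: split => k; rewrite mulr_ge0 // subr_ge0.
- rewrite big_split_ord /w'.
  under eq_bigr do rewrite (unsplitK (inl _)).
  under [X in _ + X = _]eq_bigr do rewrite (unsplitK (inr _)).
  by rewrite -!mulr_sumr w1 v1 !mulr1 addrC subrK.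
- by move=> i; rewrite /a'; case: split.
- rewrite big_split_ord /w' /a' !scaler_sumr.
  under [X in _ = X + _]eq_bigr do rewrite (unsplitK (inl _)).
  under [X in _ = _ + X]eq_bigr do rewrite (unsplitK (inr _)).
  by congr (_ + _); apply: eq_bigr => i _; rewrite scalerA.
Qed.

Lemma conv_hull_linear A (A' : set vec) (f : vec -> vec) x :
  (forall y z, f (y + z) = f y + f z) -> (forall (t : R) y, f (t *: y) = t *: f y) ->
  (forall y, A y -> A' (f y)) -> conv_hull A x -> conv_hull A' (f x).
Proof.
move=> fD fZ fA [n [w [a [w0 w1 aA ->]]]].
exists n, w, (f \o a); split=> // [i|]; first exact/fA/aA.
have f0 : f 0 = 0 by have := fZ 0 0; rewrite !scale0r.
by rewrite (big_morph f fD f0); apply: eq_bigr => i _; rewrite fZ.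
Qed.

Lemma conv_hull_dotv_le A z (M : R) x :
  (forall y, A y -> dotv y z <= M) -> conv_hull A x -> dotv x z <= M.
Proof.
move=> AM [n [w [a [w0 w1 aA ->]]]].
rewrite dotv_suml -[M]mul1r -w1 mulr_suml ler_sum // => i _.
by rewrite dotvZl ler_wpM2l ?AM.
Qed.

End ConvexHull.

Section Gauge.
Variables (R : realType) (p : nat) (B : set 'rV[R]_p).
Local Notation vec := 'rV[R]_p.
Hypothesis B_convex :
  forall (l : R) x y, 0 <= l <= 1 -> B x -> B y -> B (l *: x + (1 - l) *: y).
Hypothesis B_oppr : forall x, B x -> B (- x).
Hypothesis B_absorbing : forall x, exists2 t : R, 0 < t & B (t^-1 *: x).
Implicit Types (x y z : vec).

Lemma gauge_le x (t : R) c : 0 < t -> B c -> x = t *: c -> gauge B x <= t.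
Proof.
move=> t0 Bc xE; apply: ge_inf; last by split=> //; exists c.
by exists 0 => r [/ltW].
Qed.

Lemma gauge_ge x (M : R) :
  (forall (t : R) c, 0 < t -> B c -> x = t *: c -> M <= t) -> M <= gauge B x.
Proof.
move=> xM; apply: lb_le_inf => [|t [t0 [c Bc xE]]]; last exact: xM t c t0 Bc xE.
have [t t0 Bx] := B_absorbing x.
exists t; split=> //; exists (t^-1 *: x) => //.
by rewrite scalerA mulfV ?gt_eqF ?scale1r.
Qed.

Lemma gauge_ge0 x : 0 <= gauge B x.
Proof. by apply: gauge_ge => t c /ltW. Qed.

Lemma gauge0 : gauge B 0 = 0.
Proof.
have [t t0] := B_absorbing 0; rewrite scaler0 => B0.
apply/eqP; rewrite eq_le gauge_ge0 andbT; apply/ler_addgt0Pr => e e0.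
by rewrite add0r (gauge_le e0 B0) ?scaler0.
Qed.

Lemma gaugeZ_le (a : R) x : gauge B (a *: x) <= `|a| * gauge B x.
Proof.
have [->|a0] := eqVneq a 0; first by rewrite scale0r gauge0 normr0 mul0r.
have na : 0 < `|a| by rewrite normr_gt0.
rewrite -ler_pdivrMl //; apply: gauge_ge => t c t0 Bc ->; rewrite ler_pdivrMl //.
have [a_gt0|a_le0] := ltrP 0 a.
  by apply: (gauge_le (mulr_gt0 na t0) Bc); rewrite gtr0_norm // scalerA.
apply: (gauge_le (mulr_gt0 na t0) (B_oppr Bc)).
by rewrite ler0_norm // scalerA scalerN mulNr scaleNr opprK.
Qed.

Lemma gaugeZ (a : R) x : gauge B (a *: x) = `|a| * gauge B x.
Proof.
apply/eqP; rewrite eq_le gaugeZ_le /=; have [->|a0] := eqVneq a 0.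
  by rewrite normr0 mul0r gauge_ge0.
rewrite -ler_pdivlMl ?normr_gt0 // -normfV.
by have := gaugeZ_le a^-1 (a *: x); rewrite scalerA mulVf ?scale1r.
Qed.

Lemma gaugeN x : gauge B (- x) = gauge B x.
Proof. by rewrite -scaleN1r gaugeZ normrN1 mul1r. Qed.

Lemma gaugeD x y : gauge B (x + y) <= gauge B x + gauge B y.
Proof.
have split_le t u c d : 0 < t -> 0 < u -> B c -> B d -> x = t *: c -> y = u *: d ->
    gauge B (x + y) <= t + u.
  move=> t0 u0 Bc Bd -> ->; have tu : 0 < t + u := addr_gt0 t0 u0.
  apply: (gauge_le tu (B_convex (l := t / (t + u)) _ Bc Bd)).
    by apply/andP; split; rewrite ?divr_ge0 ?ler_pdivrMr ?mul1r ?lerDl ?ltW.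
  rewrite scalerDr !scalerA mulrBr mulr1 mulrCA mulfV ?gt_eqF // mulr1.
  by rewrite (addrC t u) addrK.
suff : gauge B (x + y) - gauge B y <= gauge B x by lra.
apply: (gauge_ge (x := x)) => t c t0 Bc xE.
suff : gauge B (x + y) - t <= gauge B y by lra.
apply: (gauge_ge (x := y)) => u d u0 Bd yE.
by have := split_le t u c d t0 u0 Bc Bd xE yE; lra.
Qed.

Lemma gauge_sublinear : sublinear (gauge B).
Proof. by split=> [|t x t0]; [exact: gaugeD | rewrite gaugeZ ger0_norm]. Qed.

Lemma gauge_le_homo (f : vec -> vec) x :
  (forall (t : R) y, f (t *: y) = t *: f y) -> (forall y, B y -> B (f y)) ->
  gauge B (f x) <= gauge B x.
Proof.
move=> fZ fB; apply: gauge_ge => t c t0 Bc ->.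
by apply: (gauge_le t0 (fB _ Bc)); rewrite fZ.
Qed.

Lemma dotv_le_gauge x z : (forall c, B c -> dotv c z <= 1) -> dotv x z <= gauge B x.
Proof.
move=> Bz; apply: gauge_ge => t c t0 Bc ->.
by rewrite dotvZl -[leRHS]mulr1 ler_wpM2l ?Bz // ltW.
Qed.

Lemma gauge_le_norm (N : vec -> R) x : is_norm N -> (forall b, N b <= 1 -> B b) ->
  gauge B x <= N x.
Proof.
move=> hN NB; have [->|x0] := eqVneq x 0; first by rewrite gauge0 (norm_on0 hN).
have Nx := norm_on_gt0 hN (suppT x) x0.
apply: (gauge_le Nx (NB ((N x)^-1 *: x) _)).
  by rewrite (norm_onZ hN _ (suppT x)) normfV gtr0_norm // mulVf ?gt_eqF.
by rewrite scalerA mulfV ?gt_eqF ?scale1r.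
Qed.

End Gauge.

Section GaugeNorm.
Variables (R : realType) (p : nat) (Om : 'rV[R]_p -> R)
  (OmS : {set 'I_p} -> 'rV[R]_p -> R) (J : {set 'I_p}).
Local Notation vec := 'rV[R]_p.
Hypothesis hOm : is_norm Om.
Hypothesis hOmS : forall S, allowed Om S ->
  is_norm_on (~: S) (OmS S) /\ forall b, Om (restr S b) + OmS S (restr (~: S) b) <= Om b.
Implicit Types (S : {set 'I_p}) (b c x z : vec).
Local Notation U := (Upsilon Om OmS).
Local Notation B := (Bg Om OmS J).
Local Notation gJ := (g Om OmS J).
Local Notation hJ := (gdual Om OmS J).

Lemma allowedT : allowed Om [set: 'I_p].
Proof.
exists (fun=> 0); split=> [|b]; last by rewrite addr0 restrT.
split=> [//|b sb _|t b _|b c _ _]; rewrite ?mulr0 ?addr0 //.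
by apply/rowP => j; rewrite mxE; apply: sb; rewrite !inE.
Qed.

Section Allowed.
Variable S : {set 'I_p}.
Hypothesis hS : allowed Om S.

Lemma Upsilon_le b : U S b <= Om b.
Proof. exact: (hOmS hS).2. Qed.

Lemma Om_restr_le b : Om (restr S b) <= Om b.
Proof.
have := Upsilon_le b; have := norm_on_ge0 (hOmS hS).1 (restr_supp b).
by rewrite /Upsilon; lra.
Qed.

Lemma Upsilon_norm : is_norm (U S).
Proof.
have hOS := (hOmS hS).1; have Om0 b := norm_on_ge0 hOm (suppT b).
have OS0 b := norm_on_ge0 hOS (restr_supp (A := ~: S) b).
split=> [b _|b _ /eqP|t b _|b c _ _]; rewrite /Upsilon.
- exact: addr_ge0.
- rewrite paddr_eq0 // => /andP[/eqP /(norm_on_eq0 hOm (suppT _)) bS /eqP bSc].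
  by rewrite -(restrC S b) bS (norm_on_eq0 hOS (restr_supp _) bSc) addr0.
- rewrite !restrZ (norm_onZ hOm _ (suppT _)) (norm_onZ hOS _ (restr_supp _)).
  by rewrite mulrDr.
- rewrite !restrD; have := norm_onD hOm (suppT (restr S b)) (suppT (restr S c)).
  by have := norm_onD hOS (restr_supp (A := ~: S) b) (restr_supp c); lra.
Qed.

Lemma sub_Bg b : U S b <= 1 -> B b.
Proof. by move=> Ub; apply: sub_conv_hull; left; exists S. Qed.

End Allowed.

Lemma Bbar_oppr b : Bbar Om OmS b -> Bbar Om OmS (- b).
Proof.
by case=> S hS Ub; exists S; rewrite //= (norm_onN (Upsilon_norm hS) (suppT b)).
Qed.

Lemma Bg_convex (l : R) x c : 0 <= l <= 1 -> B x -> B c -> B (l *: x + (1 - l) *: c).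
Proof. exact: conv_hull_convex. Qed.

Lemma Bg_oppr b : B b -> B (- b).
Proof.
apply: conv_hull_linear => [|t x|x [/Bbar_oppr|[y /Bbar_oppr y' <-]]].
- exact: opprD.
- by rewrite scalerN.
- by left.
- by right; exists (- y); rewrite ?flipvN.
Qed.

Lemma Bg_flipv b : B b -> B (flipv J b).
Proof.
apply: conv_hull_linear => [||x [Bx|[y By <-]]]; [exact: flipvD | exact: flipvZ | |].
- by right; exists x.
- by left; rewrite flipvK.
Qed.

Lemma Bg_absorbing b : exists2 t : R, 0 < t & B (t^-1 *: b).
Proof.
have hT := Upsilon_norm allowedT.
have t0 : 0 < U [set: 'I_p] b + 1 by rewrite ltr_wpDl ?(norm_on_ge0 hT (suppT b)).
exists (U [set: 'I_p] b + 1) => //; apply: (sub_Bg allowedT).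
by rewrite (norm_onZ hT _ (suppT b)) gtr0_norm ?invr_gt0 // ler_pdivrMl // mulr1 lerDl.
Qed.

Lemma g_le_Upsilon S b : allowed Om S -> gJ b <= U S b.
Proof.
move=> hS; apply: (gauge_le_norm Bg_absorbing _ (Upsilon_norm hS)) => c.
exact: sub_Bg.
Qed.

Lemma g_flipv b : gJ (flipv J b) = gJ b.
Proof.
have le c : gJ (flipv J c) <= gJ c.
  exact: (gauge_le_homo Bg_absorbing c (flipvZ J) Bg_flipv).
by apply/eqP; rewrite eq_le le -{1}[b](flipvK J) le.
Qed.

Lemma g_le_Upsilon_flipv S b : allowed Om S -> gJ b <= U S (flipv J b).
Proof. by move=> hS; rewrite -g_flipv g_le_Upsilon. Qed.

Lemma g_restrC b : gJ (restr (~: J) b) <= gJ b.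
Proof.
have := gaugeD Bg_convex Bg_absorbing b (- flipv J b); have := g_flipv b.
rewrite /g (gaugeN Bg_oppr Bg_absorbing) restrC_flipv (gaugeZ Bg_oppr Bg_absorbing).
by rewrite ger0_norm ?invr_ge0 ?ler0n //; lra.
Qed.

Lemma gdual_ge S z : allowed Om S ->
  Num.max (dual (U S) z) (dual (U S) (flipv J z)) <= hJ z.
Proof. by move=> hS; apply/bigmax_geP; right; exists S => //; exact/asboolP. Qed.

Lemma gdual_ge0 z : 0 <= hJ z.
Proof. by apply/bigmax_geP; left. Qed.

Lemma gdual_le z (M : R) : 0 <= M ->
  (forall S, allowed Om S -> dual (U S) z <= M /\ dual (U S) (flipv J z) <= M) ->
  hJ z <= M.
Proof.
move=> M0 zM; apply/bigmax_leP; split=> // S /asboolP hS.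
by have [zS fzS] := zM S hS; rewrite ge_max zS fzS.
Qed.

Lemma gdual_norm : is_norm hJ.
Proof.
have hT := Upsilon_norm allowedT.
split=> [z _|z _ hz0|t z _|z w _ _].
- exact: gdual_ge0.
- have := gdual_ge z allowedT; rewrite hz0 ge_max => /andP[zT _].
  rewrite -(restrT z); apply: (dual_on_eq0 hT); apply/le_anti/andP.
  by split; [exact: zT | exact: (dual_on_ge0 hT)].
- rewrite /gdual (big_endo (fun r => `|t| * r)) ?mulr0 //; last first.
    by move=> r1 r2; rewrite maxr_pMr.
  apply: eq_bigr => S /asboolP hS; have hU := Upsilon_norm hS.
  by rewrite flipvZ /dual !(dual_onZ hU) maxr_pMr.
- apply: gdual_le => [|S hS]; first by rewrite addr_ge0 ?gdual_ge0.
  have hU := Upsilon_norm hS; rewrite flipvD.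
  have := gdual_ge z hS; have := gdual_ge w hS.
  rewrite !ge_max => /andP[w1 w2] /andP[z1 z2].
  by split; apply: le_trans (dual_onD hU _ _) _; rewrite lerD.
Qed.

Lemma dotv_le_gdual x z : B x -> dotv x z <= hJ z.
Proof.
apply: conv_hull_dotv_le => y [[S hS Uy]|[y' [S hS Uy'] <-]].
  apply: le_trans (gdual_ge z hS); rewrite le_max (dotv_le_dual_on (Upsilon_norm hS)) //.
  exact: suppT.
apply: le_trans (gdual_ge z hS); rewrite le_max dotv_flipv.
by rewrite (dotv_le_dual_on (Upsilon_norm hS)) ?orbT //; exact: suppT.
Qed.

Lemma dual_gdual_le_g b : dual hJ b <= gJ b.
Proof.
apply: (dual_on_le gdual_norm) => z _ hz; rewrite dotvC.
by apply: (dotv_le_gauge Bg_absorbing) => c Bc; exact: le_trans (dotv_le_gdual z Bc) hz.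
Qed.

Lemma g_le_dual_gdual b : gJ b <= dual hJ b.
Proof.
have := gauge_sublinear Bg_convex Bg_oppr Bg_absorbing.
move=> /(hahn_banach_dotv b) [z [zg zb]].
rewrite /g -zb dotvC; apply: (dotv_le_dual_on gdual_norm b (suppT z)).
apply: gdual_le => // S hS; split; apply: (dual_on_le (Upsilon_norm hS)) => x _ Ux.
  exact: le_trans (zg x) (le_trans (g_le_Upsilon x hS) Ux).
rewrite -dotv_flipv; apply: le_trans (zg _) _.
by rewrite -[x](flipvK J) in Ux; exact: le_trans (g_le_Upsilon_flipv _ hS) Ux.
Qed.

Lemma g_norm : is_norm gJ.
Proof.
split=> [b _|b _ gb0|t b _|b c _ _]; rewrite /g.
- exact: gauge_ge0 Bg_absorbing b.
- have := dual_gdual_le_g b; rewrite gb0 => hb.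
  rewrite -(restrT b); apply: (dual_on_eq0 gdual_norm); apply/le_anti/andP.
  by split; [exact: hb | exact: (dual_on_ge0 gdual_norm)].
- exact: gaugeZ Bg_oppr Bg_absorbing t b.
- exact: gaugeD Bg_convex Bg_absorbing b c.
Qed.

Lemma g_dual b : gJ b = dual hJ b.
Proof.
by apply/le_anti/andP; split; [exact: g_le_dual_gdual | exact: dual_gdual_le_g].
Qed.

Lemma dual_Upsilon S z : allowed Om S -> dual (U S) z =
  Num.max (dual Om (restr S z)) (dual_on (~: S) (OmS S) (restr (~: S) z)).
Proof.
move=> hS; have hU := Upsilon_norm hS; have hOS := (hOmS hS).1.
set a := dual Om _; set c := dual_on _ _ _; set M := Num.max a c.
have aM : a <= M by rewrite le_max lexx.
have cM : c <= M by rewrite le_max lexx orbT.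
have M0 : 0 <= M := le_trans (dual_on_ge0 hOm _) aM.
apply/eqP; rewrite eq_le ge_max; apply/and3P; split.
- apply: (dual_on_le hU) => b _ Ub; rewrite -(restrC S b) dotvDl.
  set b1 := restr S b; set b2 := restr (~: S) b.
  have s1 : supported S b1 := restr_supp b.
  have s2 : supported (~: S) b2 := restr_supp b.
  rewrite (dotv_restr_supp _ s1) (dotv_restr_supp _ s2).
  have d1 := dotv_le_dual_onM hOm (restr S z) (suppT b1).
  have d2 := dotv_le_dual_onM hOS (restr (~: S) z) s2.
  apply: le_trans (lerD d1 d2) (le_trans (_ : _ <= M * (Om b1 + OmS S b2)) _).
    rewrite mulrDr lerD // ler_wpM2r //; first exact: (norm_on_ge0 hOm (suppT b1)).
    exact: (norm_on_ge0 hOS s2).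
  by rewrite -[leRHS]mulr1 ler_wpM2l.
- apply: (dual_on_le hOm) => b _ Ob; rewrite -dotv_restr.
  apply: (dotv_le_dual_on hU _ (suppT _)).
  rewrite /Upsilon restrC_restr (norm_on0 hOS) addr0 (restr_id (restr_supp b)).
  exact: le_trans (Om_restr_le hS b) Ob.
- apply: (dual_on_le hOS) => b sb Ob; rewrite -dotv_restr restr_id //.
  apply: (dotv_le_dual_on hU _ (suppT _)).
  by rewrite /Upsilon (restr_suppC sb) (norm_on0 hOm) add0r (restr_id sb).
Qed.

End GaugeNorm.

Unset Implicit Arguments.

Theorem lemma2 (R : realType) (p : nat) (Om : 'rV[R]_p -> R)
  (OmS : {set 'I_p} -> 'rV[R]_p -> R) (J : {set 'I_p}) :
  is_norm Om ->
  (forall S, allowed Om S ->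
     is_norm_on (~: S) (OmS S) /\
     forall b, Om (restr S b) + OmS S (restr (~: S) b) <= Om b) ->
  [/\ is_norm (g Om OmS J),
      (forall S, allowed Om S -> forall b,
         [/\ g Om OmS J b <= Upsilon Om OmS S b,
             Upsilon Om OmS S b <= Om b &
             g Om OmS J b <= Upsilon Om OmS S (flipv J b)]),
      (is_norm (gdual Om OmS J) /\
       (forall b, g Om OmS J b = dual (gdual Om OmS J) b)) /\
      (forall S, allowed Om S -> forall z,
         dual (Upsilon Om OmS S) z =
         Num.max (dual Om (restr S z)) (dual_on (~: S) (OmS S) (restr (~: S) z))) &
      forall b, g Om OmS J (restr (~: J) b) <= g Om OmS J b].
Proof.
move=> hOm hOmS; split.
- exact: g_norm.
- move=> S hS b.
  by split; [exact: g_le_Upsilon | exact: Upsilon_le | exact: g_le_Upsilon_flipv].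
- split; [split=> [|b] | move=> S hS z]; first exact: gdual_norm.
    exact: g_dual.
  exact: dual_Upsilon.
- exact: g_restrC.
Qed.
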